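(* Let $A$ be a commutative noetherian local ring, let $x,y\in A$ be an exact pair of zero divisors, and let $a\in A$. (a) If $a$ is weakly regular on $A/(y)$, then $G_a$ is isomorphic to the ideal $(y,a)$ of $A$. (b) If $a$ is weakly regular on $A/(x)$, then $H_a$ is isomorphic to the ideal $(x,a)$ of $A$.
   Context: Two non-units $x,y\in A$ form an exact pair of zero divisors if $\operatorname{Ann}_A(x)=(y)$ and $\operatorname{Ann}_A(y)=(x)$. An element $a\in A$ is weakly regular on a module $M$ if multiplication by $a$ on $M$ is injective. For $a\in A$, let $\gamma_a=\begin{pmatrix} x & a\\ 0 & y\end{pmatrix}$ and $\eta_a=\begin{pmatrix} y & -a\\ 0 & x\end{pmatrix}$, viewed as $A$-linear maps $A^2\to A^2$ acting on column vectors, and set $G_a=\operatorname{Coker}\gamma_a$, $H_a=\operatorname{Coker}\eta_a$. *)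

From HB Require Import structures.
From mathcomp Require Import all_boot all_algebra.
Set Implicit Arguments. Unset Strict Implicit. Unset Printing Implicit Defensive.
Import GRing.Theory.
Local Open Scope ring_scope.

Section Defs.
Variable A : comUnitRingType.

Definition is_ideal (I : A -> Prop) : Prop :=
  [/\ I 0, (forall u v, I u -> I v -> I (u + v)) & (forall r u, I u -> I (r * u))].

Definition noetherian : Prop :=
  forall I : nat -> A -> Prop,
    (forall n, is_ideal (I n)) ->
    (forall n u, I n u -> I n.+1 u) ->
    exists N, forall n u, (N <= n)%N -> I n u -> I N u.

(* Local ring (A is nontrivial as a comUnitRingType): the non-units are closed
   under addition, i.e. the non-units form the unique maximal ideal. *)
Definition local_ring : Prop :=
  forall u v : A, u \notin GRing.unit -> v \notin GRing.unit ->
    (u + v) \notin GRing.unit.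

Definition pideal (z : A) : A -> Prop := fun w => exists r, w = r * z.
Definition ideal2 (u v : A) : A -> Prop := fun w => exists r s, w = r * u + s * v.

Definition ann_eq (z w : A) : Prop := forall t, t * z = 0 <-> pideal w t.

Definition exact_pair (x y : A) : Prop :=
  [/\ x \notin GRing.unit, y \notin GRing.unit, ann_eq x y & ann_eq y x].

(* a is weakly regular on A/(z): multiplication by a on A/(z) is injective. *)
Definition weakly_regular_mod (a z : A) : Prop :=
  forall t, pideal z (a * t) -> pideal z t.

(* gamma_a = [[x, a], [0, y]] and eta_a = [[y, -a], [0, x]] acting on column vectors *)
Definition mx2 (p q r s : A) : 'M[A]_2 :=
  \matrix_(i, j) if (i == 0 :> nat) then (if (j == 0 :> nat) then p else q)
                 else (if (j == 0 :> nat) then r else s).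
Definition gamma_mx (x y a : A) : 'M[A]_2 := mx2 x a 0 y.
Definition eta_mx (x y a : A) : 'M[A]_2 := mx2 y (- a) 0 x.

(* Coker M (M : A^2 -> A^2 on column vectors) is isomorphic, as an A-module,
   to the ideal I of A: there is an A-linear map A^2 -> A whose image is
   exactly I and whose kernel is exactly the image of M (so that it induces
   an isomorphism Coker M = A^2 / im M ~= I). *)
Definition coker_isom_ideal (M : 'M[A]_2) (I : A -> Prop) : Prop :=
  exists f : 'cV[A]_2 -> A,
    [/\ (forall (r : A) (u v : 'cV[A]_2), f (r *: u + v) = r * f u + f v),
        (forall u, I (f u)),
        (forall w, I w -> exists u, f u = w) &
        (forall u, f u = 0 <-> exists v : 'cV[A]_2, u = M *m v)].
End Defs.

From HB Require Import structures.
From mathcomp Require Import all_boot all_algebra.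
From mathcomp Require Import ring.
Set Implicit Arguments.
Unset Strict Implicit.
Unset Printing Implicit Defensive.
Local Open Scope ring_scope.
Import GRing.Theory.

(* Send (u0, u1) to y u0 - a u1.  Its image is (y, a); a syzygy y u0 = a u1
   forces u1 = y v1 by weak regularity of a on A/(y), and then
   u0 - a v1 lies in Ann(y) = (x), which is exactly the column space of gamma_a.
   Part (b) is part (a) for the exact pair (y, x) and -a, since eta_a is
   gamma_(-a) with x and y exchanged. *)

Definition cv2 {A : comUnitRingType} (u0 u1 : A) : 'cV[A]_2 :=
  \col_(i < 2) (if (i == 0 :> nat) then u0 else u1).

Lemma cv2_eta (A : comUnitRingType) (u : 'cV[A]_2) : u = cv2 (u 0 0) (u 1 0).
Proof.
apply/matrixP => i j; rewrite !mxE (ord1 j).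
by case: i => [[|[|k]]] Hk //=; congr (u _ _); apply/val_inj.
Qed.

Lemma mulmx_mx2_upper (A : comUnitRingType) (p q s : A) (v : 'cV[A]_2) :
  mx2 p q 0 s *m v = cv2 (p * v 0 0 + q * v 1 0) (s * v 1 0).
Proof.
apply/matrixP => i j.
rewrite !mxE big_ord_recr big_ord_recr big_ord0 /= !mxE (ord1 j).
have -> : widen_ord (m:=2) (leqnSn 1) ord_max = 0 by apply/val_inj.
have -> : (ord_max : 'I_2) = 1 by apply/val_inj.
by case: i => [[|[|k]]] Hk //=; rewrite ?mul0r !add0r.
Qed.

Lemma weakly_regular_modN (A : comUnitRingType) (a z : A) :
  weakly_regular_mod a z -> weakly_regular_mod (- a) z.
Proof.
move=> reg_a t [r Er]; apply: reg_a; exists (- r).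
by rewrite mulNr -Er mulNr opprK.
Qed.

Lemma ideal2N (A : comUnitRingType) (u v w : A) :
  ideal2 u (- v) w <-> ideal2 u v w.
Proof. by split=> -[r [s ->]]; exists r, (- s); rewrite ?mulrNN // mulNr mulrN. Qed.

Lemma coker_isom_ideal_ext (A : comUnitRingType) (M : 'M[A]_2) (I J : A -> Prop) :
  (forall w, I w <-> J w) -> coker_isom_ideal M I -> coker_isom_ideal M J.
Proof.
move=> IJ [f [lin_f im_f surj_f ker_f]]; exists f; split=> //.
- by move=> u; apply/IJ.
- by move=> w /IJ; apply: surj_f.
Qed.

Lemma ann_eq_mul (A : comUnitRingType) (z w : A) : ann_eq z w -> w * z = 0.
Proof. by move=> ann_z; apply/ann_z; exists 1; rewrite mul1r. Qed.

Section CokerGamma.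
Variables (A : comUnitRingType) (x y a : A).
Hypotheses (ann_y : ann_eq y x) (reg_a : weakly_regular_mod a y).

Lemma gamma_syzygy (u0 u1 : A) : y * u0 = a * u1 ->
  exists v0 v1, u0 = x * v0 + a * v1 /\ u1 = y * v1.
Proof.
move=> syz.
have [v1 Ev1] : pideal y u1 by apply: reg_a; exists u0; rewrite -syz mulrC.
have [v0 Ev0] : pideal x (u0 - a * v1).
  by apply/ann_y; rewrite mulrBl -mulrA -Ev1 -syz mulrC subrr.
exists v0, v1; split; last by rewrite mulrC.
by rewrite mulrC -Ev0 subrK.
Qed.

Lemma coker_gamma_isom_ideal : coker_isom_ideal (gamma_mx x y a) (ideal2 y a).
Proof.
exists (fun u => y * u 0 0 - a * u 1 0); split.
- by move=> r u v; rewrite !mxE; ring.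
- by move=> u; exists (u 0 0), (- u 1 0); ring.
- move=> w [r [s ->]]; exists (cv2 r (- s)); rewrite !mxE /=; ring.
- move=> u; split.
  + move/eqP; rewrite subr_eq0 => /eqP /gamma_syzygy [v0 [v1 [E0 E1]]].
    exists (cv2 v0 v1).
    by rewrite /gamma_mx mulmx_mx2_upper {1}(cv2_eta u) E0 E1 !mxE.
  + move=> [v ->]; rewrite /gamma_mx mulmx_mx2_upper !mxE /=.
    by rewrite mulrDr !mulrA (mulrC y x) (ann_eq_mul ann_y) mul0r add0r (mulrC y) subrr.
Qed.
End CokerGamma.

Theorem proposition3p8 (A : comUnitRingType) (x y a : A) :
  noetherian A -> local_ring A -> exact_pair x y ->
  (weakly_regular_mod a y -> coker_isom_ideal (gamma_mx x y a) (ideal2 y a)) /\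
  (weakly_regular_mod a x -> coker_isom_ideal (eta_mx x y a) (ideal2 x a)).
Proof.
move=> _ _ [_ _ ann_x ann_y]; split=> reg_a.
- exact: coker_gamma_isom_ideal.
- apply: (@coker_isom_ideal_ext _ _ (ideal2 x (- a))).
    by move=> w; apply: ideal2N.
  exact: coker_gamma_isom_ideal ann_x (weakly_regular_modN reg_a).
Qed.
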